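(* Let $K(u)\in\mathrm{End}(\mathbb C^d\otimes\mathbb C^{d_B})$ be an irreducible K-matrix in the representation $(\rho^{(1)},\rho^{(2)})$ with asymptotic expansion $K(u)=\tilde\kappa+O(u^{-1})$, $\tilde\kappa\in\mathrm{End}(\mathbb C^d\otimes\mathbb C^{d_B})$. Then $\tilde\kappa=\kappa\otimes1$ for some $\kappa\in\mathrm{End}(\mathbb C^d)$.
   Context: Let $\mathfrak g$ be a complex simple Lie algebra with basis $\{X_A\}$, Killing form $B_{AB}=\mathrm{Tr}(\mathrm{ad}_{X_A}\circ\mathrm{ad}_{X_B})$ and inverse $B^{AB}$ (repeated indices summed). Let $\rho^{(1)},\rho^{(2)}:\mathfrak g\to\mathrm{End}(\mathbb C^d)$ be faithful representations and $C^{(ij)}=B^{AB}\rho^{(i)}(X_A)\otimes\rho^{(j)}(X_B)$. For $i,j\in\{1,2\}$ let $R^{(ij)}(u)\in\mathrm{End}(\mathbb C^d\otimes\mathbb C^d)$ be quasi-classical R-matrices: they satisfy $R^{(ij)}_{12}(u)R^{(ik)}_{13}(u+v)R^{(jk)}_{23}(v)=R^{(jk)}_{23}(v)R^{(ik)}_{13}(u+v)R^{(ij)}_{12}(u)$ and $R^{(ij)}(u)=1+\frac1u C^{(ij)}+O(u^{-2})$ as $u\to\infty$. Lower indices denote tensor factors of $\mathbb C^d\otimes\mathbb C^d\otimes\mathbb C^{d_B}$, and $R_{21}=P_{12}R_{12}P_{12}$ with $P$ the flip. A K-matrix in the representation $(\rho^{(1)},\rho^{(2)})$ with boundary space $\mathbb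 C^{d_B}$ is $K(u)\in\mathrm{End}(\mathbb C^d\otimes\mathbb C^{d_B})$, with an asymptotic expansion in powers of $1/u$, satisfying the boundary Yang–Baxter equation $R^{(11)}_{12}(u-v)K_{13}(u)R^{(12)}_{21}(u+v)K_{23}(v)=K_{23}(v)R^{(12)}_{12}(u+v)K_{13}(u)R^{(22)}_{21}(u-v)$. Writing $K(u)=\sum_{i,j}E_{ij}\otimes\Psi^{ij}(u)$ with $E_{ij}$ the elementary matrices of $\mathrm{End}(\mathbb C^d)$ and $\Psi^{ij}(u)\in\mathrm{End}(\mathbb C^{d_B})$, $K$ is irreducible if there is no proper nonzero subspace of $\mathbb C^{d_B}$ invariant under all $\Psi^{ij}(u)$ (all $i,j$ and $u$). *)

From HB Require Import structures.
From mathcomp Require Import all_boot all_order all_algebra.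
From mathcomp Require Import reals.
From mathcomp.real_closed Require Export complex mxtens.

Set Implicit Arguments.
Unset Strict Implicit.
Unset Printing Implicit Defensive.
Import Order.TTheory GRing.Theory Num.Theory.
Local Open Scope ring_scope.

Section Defs.
Variable C : numClosedFieldType.

(* ---------- Lie algebra given by a basis X_A (A : 'I_n) and structure
   constants:  [X_A, X_B] = \sum_C f A B C X_C. ---------- *)

Definition is_lie_algebra n (f : 'I_n -> 'I_n -> 'I_n -> C) : Prop :=
  (forall A B D, f A B D = - f B A D) /\
  (forall A D, f A A D = 0) /\
  (* Jacobi: [X_A,[X_B,X_D]] + [X_B,[X_D,X_A]] + [X_D,[X_A,X_B]] = 0 *)
  (forall A B D E,
      \sum_(G < n) (f B D G * f A G E + f D A G * f B G E + f A B G * f D G E) = 0).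

(* matrix of ad(X_A) in the basis (column-vector convention):
   ad(X_A) X_B = \sum_D f A B D X_D *)
Definition ad_mx n (f : 'I_n -> 'I_n -> 'I_n -> C) (A : 'I_n) : 'M[C]_n :=
  \matrix_(D, B) f A B D.

(* an ideal: subspace (spanned by the rows of U, as coefficient vectors)
   stable under all ad(X_A) *)
Definition is_ideal n (f : 'I_n -> 'I_n -> 'I_n -> C) (U : 'M[C]_n) : Prop :=
  forall A, stablemx U (ad_mx f A)^T.

Definition is_simple_lie_algebra n (f : 'I_n -> 'I_n -> 'I_n -> C) : Prop :=
  is_lie_algebra f /\
  (exists A B D, f A B D != 0) /\
  (forall U : 'M[C]_n, is_ideal f U -> U = 0 \/ row_full U).

Definition killing n (f : 'I_n -> 'I_n -> 'I_n -> C) : 'M[C]_n :=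
  \matrix_(A, B) \tr (ad_mx f A *m ad_mx f B).
Definition killing_inv n (f : 'I_n -> 'I_n -> 'I_n -> C) : 'M[C]_n :=
  invmx (killing f).

Definition is_rep n (f : 'I_n -> 'I_n -> 'I_n -> C) d (rho : 'I_n -> 'M[C]_d)
  : Prop :=
  forall A B, rho A *m rho B - rho B *m rho A = \sum_(D < n) f A B D *: rho D.

Definition is_faithful n d (rho : 'I_n -> 'M[C]_d) : Prop :=
  forall c : 'I_n -> C, \sum_(A < n) c A *: rho A = 0 -> forall A, c A = 0.

Definition casimir n (f : 'I_n -> 'I_n -> 'I_n -> C) d1 d2
  (rho1 : 'I_n -> 'M[C]_d1) (rho2 : 'I_n -> 'M[C]_d2) : 'M[C]_(d1 * d2) :=
  \sum_(A < n) \sum_(B < n) killing_inv f A B *: tensmx (rho1 A) (rho2 B).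

(* ---------- legs in a triple tensor product V1 (x) V2 (x) V3 ----------
   index of V1 (x) V2 (x) V3 is 'I_(a * b * c) = 'I_((a * b) * c),
   with (i1,i2,i3) |-> mxtens_index (mxtens_index (i1,i2), i3). *)

Definition idx1 a b c (I : 'I_(a * b * c)) : 'I_a :=
  (mxtens_unindex (mxtens_unindex I).1).1.
Definition idx2 a b c (I : 'I_(a * b * c)) : 'I_b :=
  (mxtens_unindex (mxtens_unindex I).1).2.
Definition idx3 a b c (I : 'I_(a * b * c)) : 'I_c := (mxtens_unindex I).2.

Definition leg12 a b c (X : 'M[C]_(a * b)) : 'M[C]_(a * b * c) :=
  \matrix_(I, J) (X (mxtens_index (idx1 I, idx2 I)) (mxtens_index (idx1 J, idx2 J))
                  * (idx3 I == idx3 J)%:R).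
Definition leg13 a b c (X : 'M[C]_(a * c)) : 'M[C]_(a * b * c) :=
  \matrix_(I, J) (X (mxtens_index (idx1 I, idx3 I)) (mxtens_index (idx1 J, idx3 J))
                  * (idx2 I == idx2 J)%:R).
Definition leg23 a b c (X : 'M[C]_(b * c)) : 'M[C]_(a * b * c) :=
  \matrix_(I, J) (X (mxtens_index (idx2 I, idx3 I)) (mxtens_index (idx2 J, idx3 J))
                  * (idx1 I == idx1 J)%:R).
(* X_{21} = P_{12} X_{12} P_{12}: first tensor factor of X on V2, second on V1 *)
Definition leg21 a b c (X : 'M[C]_(b * a)) : 'M[C]_(a * b * c) :=
  \matrix_(I, J) (X (mxtens_index (idx2 I, idx1 I)) (mxtens_index (idx2 J, idx1 J))
                  * (idx3 I == idx3 J)%:R).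

Definition bigO_inf m p (F : C -> 'M[C]_(m, p)) (k : nat) : Prop :=
  exists M r : C, 0 <= M /\ 0 <= r /\
    forall u : C, r < `|u| -> forall i j, `|F u i j| <= M / `|u| ^+ k.

Definition has_asymptotic_expansion m p (F : C -> 'M[C]_(m, p)) : Prop :=
  exists coef : nat -> 'M[C]_(m, p),
    forall N : nat,
      bigO_inf (fun u => F u - \sum_(k < N) u ^- k *: coef k) N.

(* ---------- R-matrices and K-matrices ----------
   Functions C -> matrices; the (finite) set S collects the possible poles:
   the functional equations are required where all arguments avoid S. *)

Definition YBE_family d (S : seq C) (R : 'I_2 -> 'I_2 -> C -> 'M[C]_(d * d))
  : Prop :=
  forall (i j k : 'I_2) (u v : C),
    u \notin S -> v \notin S -> u + v \notin S ->
    @leg12 d d d (R i j u) *m @leg13 d d d (R i k (u + v)) *m @leg23 d d d (R j k v)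
    = @leg23 d d d (R j k v) *m @leg13 d d d (R i k (u + v)) *m @leg12 d d d (R i j u).

Definition quasi_classical n (f : 'I_n -> 'I_n -> 'I_n -> C) d
  (rho : 'I_2 -> 'I_n -> 'M[C]_d) (R : 'I_2 -> 'I_2 -> C -> 'M[C]_(d * d))
  : Prop :=
  forall i j : 'I_2,
    bigO_inf (fun u => R i j u - 1 - u^-1 *: casimir f (rho i) (rho j)) 2.

Definition BYBE d dB (S : seq C) (R : 'I_2 -> 'I_2 -> C -> 'M[C]_(d * d))
  (K : C -> 'M[C]_(d * dB)) : Prop :=
  forall u v : C,
    u \notin S -> v \notin S -> u + v \notin S -> u - v \notin S ->
    @leg12 d d dB (R 0 0 (u - v)) *m @leg13 d d dB (K u)
      *m @leg21 d d dB (R 0 1 (u + v)) *m @leg23 d d dB (K v)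
    = @leg23 d d dB (K v) *m @leg12 d d dB (R 0 1 (u + v))
      *m @leg13 d d dB (K u) *m @leg21 d d dB (R 1 1 (u - v)).

(* K(u) = \sum_{i,j} E_{ij} (x) Psi^{ij}(u) *)
Definition Psi d dB (K : C -> 'M[C]_(d * dB)) (u : C) (i j : 'I_d) : 'M[C]_dB :=
  \matrix_(k, l) K u (mxtens_index (i, k)) (mxtens_index (j, l)).

(* irreducible: no proper nonzero subspace of C^{dB} (spanned by the rows of U,
   read as column vectors) is invariant under all Psi^{ij}(u), u off the poles *)
Definition K_irreducible d dB (S : seq C) (K : C -> 'M[C]_(d * dB)) : Prop :=
  forall U : 'M[C]_dB,
    (forall (i j : 'I_d) (u : C), u \notin S -> stablemx U (Psi K u i j)^T) ->
    U = 0 \/ row_full U.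

End Defs.

Arguments leg12 {C} a b c X.
Arguments leg13 {C} a b c X.
Arguments leg23 {C} a b c X.
Arguments leg21 {C} a b c X.

(** Let [u] tend to infinity in the boundary Yang-Baxter equation with [v]
    fixed.  Quasi-classicality makes every R-matrix factor tend to [1], and
    [K(u)] tends to [kappa_t]; the equation therefore degenerates into the
    commutation relation [K_23(v) kappa_t,13 = kappa_t,13 K_23(v)].  Read
    blockwise, each block [kappa_t^{ij}] commutes with every [Psi^{ab}(v)],
    so by irreducibility of [K] and Schur's lemma it is a scalar [kappa_ij];
    hence [kappa_t = kappa (x) 1]. *)

From HB Require Import structures.
From mathcomp Require Import all_boot all_order all_algebra.
From mathcomp Require Import ring.
From mathcomp Require Import reals.
From mathcomp.real_closed Require Import complex mxtens.

Set Implicit Arguments.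
Unset Strict Implicit.
Unset Printing Implicit Defensive.
Import Order.TTheory GRing.Theory Num.Theory.
Local Open Scope ring_scope.

Section BigOOn.
Variable C : numFieldType.

(* [bigO_inf] along the [u] satisfying [P]: the boundary Yang-Baxter equation
   only holds off the poles. *)
Definition bigO_on (P : C -> Prop) m p (F : C -> 'M[C]_(m, p)) (k : nat) :=
  exists M r : C, 0 <= M /\ 0 <= r /\
    forall u, P u -> r < `|u| -> forall i j, `|F u i j| <= M / `|u| ^+ k.

Lemma lt_of_ltDr (r1 r2 x : C) : 0 <= r2 -> r1 + r2 < x -> r1 < x.
Proof. by move=> r2_ge0; apply: le_lt_trans; rewrite lerDl. Qed.

Lemma lt_of_ltDl (r1 r2 x : C) : 0 <= r1 -> r1 + r2 < x -> r2 < x.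
Proof. by rewrite addrC; apply: lt_of_ltDr. Qed.

Lemma bigO_on_ext P m p (F G : C -> 'M[C]_(m, p)) k :
  (forall u, P u -> F u = G u) -> bigO_on P F k -> bigO_on P G k.
Proof.
move=> eFG [M [r [M0 [r0 FM]]]]; exists M, r; do 2 split=> //.
by move=> u Pu ru i j; rewrite -eFG //; apply: FM.
Qed.

Lemma bigO_on_le P m p m' p' (F : C -> 'M[C]_(m, p)) (G : C -> 'M[C]_(m', p')) k :
  (forall u i j, exists i' j', `|G u i j| <= `|F u i' j'|) ->
  bigO_on P F k -> bigO_on P G k.
Proof.
move=> GF [M [r [M0 [r0 FM]]]]; exists M, r; do 2 split=> //.
by move=> u Pu ru i j; have [i' [j' /le_trans]] := GF u i j; apply; apply: FM.
Qed.

Lemma bigO_onD P m p (F G : C -> 'M[C]_(m, p)) k :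
  bigO_on P F k -> bigO_on P G k -> bigO_on P (fun u => F u + G u) k.
Proof.
move=> [M1 [r1 [M10 [r10 FM]]]] [M2 [r2 [M20 [r20 GM]]]].
exists (M1 + M2), (r1 + r2); split; first exact: addr_ge0.
split=> [|u Pu ru i j]; first exact: addr_ge0.
rewrite mxE mulrDl; apply: le_trans (ler_normD _ _) _; apply: lerD.
  by apply: FM => //; apply: lt_of_ltDr ru.
by apply: GM => //; apply: lt_of_ltDl ru.
Qed.

Lemma bigO_onN P m p (F : C -> 'M[C]_(m, p)) k :
  bigO_on P F k -> bigO_on P (fun u => - F u) k.
Proof.
by apply: bigO_on_le => u i j; exists i, j; rewrite mxE normrN.
Qed.

Lemma bigO_onB P m p (F G : C -> 'M[C]_(m, p)) k :
  bigO_on P F k -> bigO_on P G k -> bigO_on P (fun u => F u - G u) k.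
Proof. by move=> FO /bigO_onN; apply: bigO_onD. Qed.

Lemma bigO_on_cst P m p (X : 'M[C]_(m, p)) : bigO_on P (fun=> X) 0.
Proof.
exists (\sum_i \sum_j `|X i j|), 0; split.
  by apply: sumr_ge0 => i _; apply: sumr_ge0.
split=> // u _ _ i j; rewrite expr0 divr1 (bigD1 i) //= (bigD1 j) //= -addrA.
by rewrite lerDl addr_ge0 ?sumr_ge0 // => l _; rewrite sumr_ge0.
Qed.

Lemma bigO_onM P m n p (F : C -> 'M[C]_(m, n)) (G : C -> 'M[C]_(n, p)) k1 k2 :
  bigO_on P F k1 -> bigO_on P G k2 -> bigO_on P (fun u => F u *m G u) (k1 + k2).
Proof.
move=> [M1 [r1 [M10 [r10 FM]]]] [M2 [r2 [M20 [r20 GM]]]].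
exists ((M1 * M2) *+ n), (r1 + r2); split; first by rewrite mulrn_wge0 ?mulr_ge0.
split=> [|u Pu ru i j]; first exact: addr_ge0.
rewrite mxE; apply: le_trans (ler_norm_sum _ _ _) _.
apply: (@le_trans _ _ (\sum_(l < n) (M1 / `|u| ^+ k1) * (M2 / `|u| ^+ k2))).
  apply: ler_sum => l _; rewrite normrM; apply: ler_pM => //.
    by apply: FM => //; apply: lt_of_ltDr ru.
  by apply: GM => //; apply: lt_of_ltDl ru.
by rewrite sumr_const card_ord exprD invfM le_eqVlt; apply/orP; left; apply/eqP; ring.
Qed.

Lemma bigO_onW P m p (F : C -> 'M[C]_(m, p)) k : bigO_on P F k.+1 -> bigO_on P F k.
Proof.
move=> [M [r [M0 [r0 FM]]]]; exists M, (r + 1); split=> //.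
split=> [|u Pu ru i j]; first exact: addr_ge0.
have u_gt1 : 1 < `|u| by apply: lt_of_ltDl ru.
have u_gt0 : 0 < `|u| by apply: lt_trans u_gt1.
apply: le_trans (FM u Pu (lt_of_ltDr ler01 ru) i j) _.
rewrite exprS invfM mulrA [M * _]mulrC -mulrA mulrC ler_pdivrMr //.
by rewrite ler_peMr ?divr_ge0 ?exprn_ge0 // ltW.
Qed.

Lemma bigO_on_invZ P m p (X : 'M[C]_(m, p)) : bigO_on P (fun u => u^-1 *: X) 1.
Proof.
have [M [r [M0 [r0 XM]]]] := bigO_on_cst P X.
exists M, r; do 2 split=> //; move=> u Pu ru i j.
rewrite mxE normrM normfV expr1 mulrC ler_wpM2r ?invr_ge0 //.
by have := XM u Pu ru i j; rewrite expr0 divr1.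
Qed.

Lemma bigO_on_shift (P Q : C -> Prop) m p (F : C -> 'M[C]_(m, p)) (c : C) :
  (forall u, Q u -> P (u + c)) -> bigO_on P F 1 -> bigO_on Q (fun u => F (u + c)) 1.
Proof.
move=> QP [M [r [M0 [r0 FM]]]].
exists (M *+ 2), (r + `|c| *+ 2); split; first exact: mulrn_wge0.
split=> [|u Qu ru i j]; first by rewrite addr_ge0 ?mulrn_wge0.
have c_lt_u : `|c| *+ 2 < `|u| by apply: lt_of_ltDl ru.
have u_le : `|u| <= `|u + c| + `|c|.
  by rewrite -{1}[u](addrK c); apply: ler_normB.
have u_le2 : `|u| <= `|u + c| *+ 2.
  rewrite -(lerD2r `|u|); apply: (@le_trans _ _ (`|u + c| *+ 2 + `|c| *+ 2)).
    by rewrite -mulrnDl mulr2n; apply: lerD.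
  by rewrite lerD2l ltW.
have u_gt0 : 0 < `|u| by apply: le_lt_trans c_lt_u; apply: mulrn_wge0.
have uc_gt0 : 0 < `|u + c|.
  by rewrite -(pmulrn_lgt0 _ (isT : (0 < 2)%N)); apply: lt_le_trans u_le2.
have r_lt_uc : r < `|u + c|.
  rewrite -(ltrD2r `|c|); apply: lt_le_trans u_le; apply: le_lt_trans ru.
  by rewrite lerD2l mulr2n lerDl.
apply: le_trans (FM _ (QP _ Qu) r_lt_uc i j) _.
rewrite !expr1 ler_pdivrMr // mulrAC ler_pdivlMr // mulrnAl -mulrnAr.
exact: ler_wpM2l.
Qed.

Lemma bigO_on_cst_eq0 P m p (X : 'M[C]_(m, p)) :
  (forall B, 0 <= B -> exists u, P u /\ B < `|u|) ->
  bigO_on P (fun=> X) 1 -> X = 0.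
Proof.
move=> P_unbounded [M [r [M0 [r0 XM]]]]; apply/matrixP => i j; rewrite mxE.
apply/eqP; rewrite -normr_eq0; apply: contraTT isT => Xij_neq0.
have Xij_gt0 : 0 < `|X i j| by rewrite lt_def Xij_neq0 normr_ge0.
have [u [Pu Bu]] := P_unbounded _ (addr_ge0 r0 (divr_ge0 M0 (ltW Xij_gt0))).
have ru : r < `|u| by apply: lt_of_ltDr Bu; rewrite divr_ge0 // ltW.
have u_gt0 : 0 < `|u| by apply: le_lt_trans ru.
have := XM u Pu ru i j; rewrite expr1 ler_pdivlMr // => XuM.
have := lt_of_ltDl r0 Bu; rewrite ltr_pdivrMr // mulrC => MXu.
by have := lt_le_trans MXu XuM; rewrite ltxx.
Qed.

Lemma bigO_on_mulmx_near1 P N (A B D : C -> 'M[C]_N) (X : 'M[C]_N) :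
  bigO_on P (fun u => A u - 1%:M) 1 -> bigO_on P (fun u => B u - X) 1 ->
  bigO_on P (fun u => D u - 1%:M) 1 ->
  bigO_on P (fun u => A u *m B u *m D u - X) 1.
Proof.
move=> A1 BX D1.
have B0 : bigO_on P B 0.
  by apply: bigO_on_ext (bigO_onD (bigO_onW BX) (bigO_on_cst P X)) => u _; rewrite subrK.
have D0 : bigO_on P D 0.
  by apply: bigO_on_ext (bigO_onD (bigO_onW D1) (bigO_on_cst P 1%:M)) => u _; rewrite subrK.
have ABD := bigO_onM A1 (bigO_onM B0 D0).
have BD := bigO_onM BX D0.
have XD := bigO_onM (bigO_on_cst P X) D1.
apply: bigO_on_ext (bigO_onD (bigO_onD ABD BD) XD) => u _.
by rewrite !mulmxBl !mulmxBr mul1mx mulmx1 mulmxA !addrA !subrK.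
Qed.

Lemma exists_notin_large (S : seq C) (B : C) : 0 <= B ->
  exists u, u \notin S /\ B < `|u|.
Proof.
move=> B0; pose Sn := \sum_(s <- S) `|s|.
have Sn_ge0 : 0 <= Sn by rewrite sumr_ge0.
have le_Sn s : s \in S -> `|s| <= Sn.
  by move=> sS; rewrite /Sn (big_rem s) //= lerDl sumr_ge0.
pose u := B + 1 + Sn.
have u_ge0 : 0 <= u by rewrite !addr_ge0.
have Sn_lt_u : Sn < u by rewrite ltrDr; apply: ltr_wpDl B0 ltr01.
exists u; rewrite ger0_norm //; split.
  by apply/negP => /le_Sn/le_lt_trans/(_ Sn_lt_u); rewrite ger0_norm // ltxx.
by rewrite /u -addrA ltrDl; apply: ltr_pwDl ltr01 Sn_ge0.
Qed.

Lemma exists_large_off_shifts (S : seq C) (v B : C) : 0 <= B ->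
  exists u, (u \notin S /\ u + v \notin S /\ u - v \notin S) /\ B < `|u|.
Proof.
move=> B0; pose S' := S ++ [seq s - v | s <- S] ++ [seq s + v | s <- S].
have [u [uS' Bu]] := exists_notin_large S' B0.
move: uS'; rewrite !mem_cat !negb_or => /and3P[uS uSB uSD].
exists u; do !split=> //.
  by apply: contra uSB => uvS; apply/mapP; exists (u + v); rewrite ?addrK.
by apply: contra uSD => uvS; apply/mapP; exists (u - v); rewrite ?subrK.
Qed.

End BigOOn.

Lemma irreducible_comm_scalar (F : closedFieldType) n (Fam : 'M[F]_n -> Prop)
    (k : 'M[F]_n) :
  (forall U : 'M[F]_n, (forall Ps, Fam Ps -> stablemx U Ps^T) ->
     U = 0 \/ row_full U) ->
  (forall Ps, Fam Ps -> k *m Ps = Ps *m k) -> is_scalar_mx k.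
Proof.
case: n Fam k => [|n] Fam k irr comm; apply/is_scalar_mxP.
  by exists 0; apply/matrixP => -[].
have [l root_l] : exists l, root (char_poly k^T) l.
  by apply/closed_rootP; rewrite size_char_poly.
have stable Ps : Fam Ps -> stablemx (eigenspace k^T l) Ps^T.
  by move=> FPs; apply: comm_mx_stable_eigenspace; rewrite /comm_mx -!trmx_mul comm.
case: (irr _ stable) => [eigen0 | full].
  by move: root_l; rewrite -eigenvalue_root_char /eigenvalue eigen0 eqxx.
exists l; apply: trmx_inj; rewrite tr_scalar_mx; apply/eqP; rewrite -subr_eq0.
have /sub_kermxP := submx_full 1%:M full.
by rewrite mul1mx => ->.
Qed.

(* [Psi K u i j] unfolds to [tens_block (K u) i j]. *)
Definition tens_block (T : Type) d dB (X : 'M[T]_(d * dB)) (i j : 'I_d) : 'M[T]_dB :=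
  \matrix_(k, l) X (mxtens_index (i, k)) (mxtens_index (j, l)).

Lemma tensmx_scalar_blocks (R : pzRingType) d dB (X : 'M[R]_(d * dB)) :
  (forall i j, is_scalar_mx (tens_block X i j)) ->
  exists kappa : 'M[R]_d, X = tensmx kappa (1%:M : 'M[R]_dB).
Proof.
case: dB X => [|dB] X X_scalar.
  by exists 0; apply/matrixP => I; case: (mxtens_indexP I) => i [].
exists (\matrix_(i, j) X (mxtens_index (i, 0)) (mxtens_index (j, 0))).
apply/matrixP => I J.
case: (mxtens_indexP I) => i k; case: (mxtens_indexP J) => j l.
have [c /matrixP Xij] := is_scalar_mxP (X_scalar i j).
move: (Xij k l) (Xij 0 0); rewrite tensmxE !mxE eqxx => -> ->.
by rewrite mulr_natr.
Qed.

Section TensorLegs.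
Variable C : numClosedFieldType.

Lemma bigO_inf_on (P : C -> Prop) m p (F : C -> 'M[C]_(m, p)) k :
  bigO_inf F k -> bigO_on P F k.
Proof.
by move=> [M [r [M0 [r0 FM]]]]; exists M, r; do 2 split=> //; move=> u _; apply: FM.
Qed.

Lemma idx1E a b c (i : 'I_a) (j : 'I_b) (k : 'I_c) :
  idx1 (mxtens_index (mxtens_index (i, j), k)) = i.
Proof. by rewrite /idx1 !mxtens_indexK. Qed.

Lemma idx2E a b c (i : 'I_a) (j : 'I_b) (k : 'I_c) :
  idx2 (mxtens_index (mxtens_index (i, j), k)) = j.
Proof. by rewrite /idx2 !mxtens_indexK. Qed.

Lemma idx3E a b c (i : 'I_a) (j : 'I_b) (k : 'I_c) :
  idx3 (mxtens_index (mxtens_index (i, j), k)) = k.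
Proof. by rewrite /idx3 !mxtens_indexK. Qed.

Definition idxE := (idx1E, idx2E, idx3E).

Lemma mxtens_index_eq m n (x y : 'I_m * 'I_n) :
  (mxtens_index x == mxtens_index y) = (x == y).
Proof. exact: (inj_eq (can_inj (@mxtens_indexK m n))). Qed.

Lemma sum_mxtens m n (F : 'I_(m * n) -> C) :
  \sum_(L < m * n) F L = \sum_(a < m) \sum_(b < n) F (mxtens_index (a, b)).
Proof.
rewrite pair_big /= (reindex (@mxtens_index m n)) /=; first by apply: eq_bigr => -[].
by exists (@mxtens_unindex m n) => x _; rewrite (mxtens_indexK, mxtens_unindexK).
Qed.

Lemma leg12B a b c (X Y : 'M[C]_(a * b)) :
  leg12 a b c (X - Y) = leg12 a b c X - leg12 a b c Y.
Proof. by apply/matrixP => I J; rewrite !mxE mulrBl. Qed.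

Lemma leg13B a b c (X Y : 'M[C]_(a * c)) :
  leg13 a b c (X - Y) = leg13 a b c X - leg13 a b c Y.
Proof. by apply/matrixP => I J; rewrite !mxE mulrBl. Qed.

Lemma leg21B a b c (X Y : 'M[C]_(b * a)) :
  leg21 a b c (X - Y) = leg21 a b c X - leg21 a b c Y.
Proof. by apply/matrixP => I J; rewrite !mxE mulrBl. Qed.

Lemma leg12_1 a b c : leg12 a b c 1%:M = 1%:M :> 'M[C]_(a * b * c).
Proof.
apply/matrixP => I J.
case: (mxtens_indexP I) => I1 k; case: (mxtens_indexP I1) => i j.
case: (mxtens_indexP J) => J1 k'; case: (mxtens_indexP J1) => i' j'.
by rewrite !mxE !idxE !(mxtens_index_eq, xpair_eqE) -natrM mulnb.
Qed.

Lemma leg21_1 a b c : leg21 a b c 1%:M = 1%:M :> 'M[C]_(a * b * c).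
Proof.
apply/matrixP => I J.
case: (mxtens_indexP I) => I1 k; case: (mxtens_indexP I1) => i j.
case: (mxtens_indexP J) => J1 k'; case: (mxtens_indexP J1) => i' j'.
by rewrite !mxE !idxE !(mxtens_index_eq, xpair_eqE) -natrM mulnb [(j == j') && _]andbC.
Qed.

Lemma normr_mul_indicator (x : C) (b : bool) : `|x * b%:R| <= `|x|.
Proof. by case: b; rewrite ?mulr1 // mulr0 normr0. Qed.

Lemma leg12_shift_near1 (P : C -> Prop) a b c (F : C -> 'M[C]_(a * b)) s :
  bigO_inf (fun w => F w - 1) 1 ->
  bigO_on P (fun u => leg12 a b c (F (u + s)) - 1%:M) 1.
Proof.
move=> F1; have := bigO_on_shift (Q := P) (c := s) (fun _ _ => I) (bigO_inf_on (fun=> True) F1).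
apply: bigO_on_le => u I J; exists (mxtens_index (idx1 I, idx2 I)), (mxtens_index (idx1 J, idx2 J)).
by rewrite -leg12_1 -leg12B mxE normr_mul_indicator.
Qed.

Lemma leg21_shift_near1 (P : C -> Prop) a b c (F : C -> 'M[C]_(b * a)) s :
  bigO_inf (fun w => F w - 1) 1 ->
  bigO_on P (fun u => leg21 a b c (F (u + s)) - 1%:M) 1.
Proof.
move=> F1; have := bigO_on_shift (Q := P) (c := s) (fun _ _ => I) (bigO_inf_on (fun=> True) F1).
apply: bigO_on_le => u I J; exists (mxtens_index (idx2 I, idx1 I)), (mxtens_index (idx2 J, idx1 J)).
by rewrite -leg21_1 -leg21B mxE normr_mul_indicator.
Qed.

Lemma leg13_near (P : C -> Prop) a b c (F : C -> 'M[C]_(a * c)) X k :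
  bigO_inf (fun u => F u - X) k ->
  bigO_on P (fun u => leg13 a b c (F u) - leg13 a b c X) k.
Proof.
move=> FX; have := bigO_inf_on P FX.
apply: bigO_on_le => u I J; exists (mxtens_index (idx1 I, idx3 I)), (mxtens_index (idx1 J, idx3 J)).
by rewrite -leg13B mxE normr_mul_indicator.
Qed.

Lemma sumr_single m (j : 'I_m) (G : 'I_m -> C) :
  (forall l, l != j -> G l = 0) -> \sum_l G l = G j.
Proof. by move=> G0; rewrite (bigD1 j) //= big1 ?addr0. Qed.

Lemma leg13_mul_leg23 d dB (X Y : 'M[C]_(d * dB)) i a k j b l :
  (leg13 d d dB X *m leg23 d d dB Y)
    (mxtens_index (mxtens_index (i, a), k)) (mxtens_index (mxtens_index (j, b), l))
  = (tens_block X i j *m tens_block Y a b) k l.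
Proof.
rewrite !mxE !sum_mxtens (@sumr_single _ j) => [|l1 l1j]; last first.
  by apply: big1 => l2 _; apply: big1 => l3 _; rewrite !mxE !idxE (negbTE l1j) !mulr0.
rewrite (@sumr_single _ a) => [|l2 l2a]; last first.
  by apply: big1 => l3 _; rewrite !mxE !idxE eq_sym (negbTE l2a) mulr0 mul0r.
by apply: eq_bigr => l3 _; rewrite !mxE !idxE !eqxx !mulr1.
Qed.

Lemma leg23_mul_leg13 d dB (X Y : 'M[C]_(d * dB)) i a k j b l :
  (leg23 d d dB Y *m leg13 d d dB X)
    (mxtens_index (mxtens_index (i, a), k)) (mxtens_index (mxtens_index (j, b), l))
  = (tens_block Y a b *m tens_block X i j) k l.
Proof.
rewrite !mxE !sum_mxtens (@sumr_single _ i) => [|l1 l1i]; last first.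
  by apply: big1 => l2 _; apply: big1 => l3 _; rewrite !mxE !idxE eq_sym (negbTE l1i) mulr0 mul0r.
rewrite (@sumr_single _ b) => [|l2 l2b]; last first.
  by apply: big1 => l3 _; rewrite !mxE !idxE (negbTE l2b) !mulr0.
by apply: eq_bigr => l3 _; rewrite !mxE !idxE !eqxx !mulr1.
Qed.

End TensorLegs.

Section BoundaryLimit.
Variable C : numClosedFieldType.

Lemma quasi_classical_near1 n (f : 'I_n -> 'I_n -> 'I_n -> C) d
    (rho : 'I_2 -> 'I_n -> 'M[C]_d) (Rm : 'I_2 -> 'I_2 -> C -> 'M[C]_(d * d)) :
  quasi_classical f rho Rm -> forall i j, bigO_inf (fun w => Rm i j w - 1) 1.
Proof.
move=> qcR i j.
have [M [r [M0 [r0 RM]]]] :=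
  bigO_onD (bigO_onW (bigO_inf_on (fun=> True) (qcR i j)))
           (bigO_on_invZ (fun=> True) (casimir f (rho i) (rho j))).
exists M, r; do 2 split=> //; move=> u ru a b.
by have := RM u I ru a b; rewrite subrK.
Qed.

Lemma BYBE_limit_comm d dB S (Rm : 'I_2 -> 'I_2 -> C -> 'M[C]_(d * d))
    (K : C -> 'M[C]_(d * dB)) (kappa : 'M[C]_(d * dB)) :
  (forall i j, bigO_inf (fun w => Rm i j w - 1) 1) -> BYBE S Rm K ->
  bigO_inf (fun u => K u - kappa) 1 -> forall v, v \notin S ->
  leg23 d d dB (K v) *m leg13 d d dB kappa = leg13 d d dB kappa *m leg23 d d dB (K v).
Proof.
move=> R1 bybe Kkappa v vS.
pose P u := u \notin S /\ u + v \notin S /\ u - v \notin S.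
have K13 := leg13_near P d Kkappa.
have lhs := bigO_on_mulmx_near1 (leg12_shift_near1 P dB (- v) (R1 0 0)) K13
  (leg21_shift_near1 P dB v (R1 0 1)).
have rhs := bigO_on_mulmx_near1 (leg12_shift_near1 P dB v (R1 0 1)) K13
  (leg21_shift_near1 P dB (- v) (R1 1 1)).
pose K23 := leg23 d d dB (K v).
(* Both sides of the boundary Yang-Baxter equation, times [K23], approach the
   two sides of the commutator, which is constant in [u]. *)
apply/eqP; rewrite -subr_eq0; apply/eqP.
apply: (bigO_on_cst_eq0 (P := P)); first exact: exists_large_off_shifts.
apply: bigO_on_ext
  (bigO_onB (bigO_onM lhs (bigO_on_cst P K23)) (bigO_onM (bigO_on_cst P K23) rhs)).
move=> u [uS [uvS uvS']].
by rewrite mulmxBl mulmxBr !mulmxA bybe // opprB addrC addrA subrK.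
Qed.

End BoundaryLimit.

Theorem corollary14 (R : realType) (n : nat) (f : 'I_n -> 'I_n -> 'I_n -> R[i])
    (d dB : nat) (rho : 'I_2 -> 'I_n -> 'M[R[i]]_d)
    (Rm : 'I_2 -> 'I_2 -> R[i] -> 'M[R[i]]_(d * d))
    (K : R[i] -> 'M[R[i]]_(d * dB)) (S : seq R[i])
    (kappa_t : 'M[R[i]]_(d * dB)) :
  is_simple_lie_algebra f ->
  (forall a : 'I_2, is_rep f (rho a) /\ is_faithful (rho a)) ->
  YBE_family S Rm ->
  quasi_classical f rho Rm ->
  has_asymptotic_expansion K ->
  BYBE S Rm K ->
  K_irreducible S K ->
  bigO_inf (fun u => K u - kappa_t) 1 ->
  exists kappa : 'M[R[i]]_d, kappa_t = tensmx kappa (1%:M : 'M[R[i]]_dB).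
Proof.
move=> _ _ _ qcR _ bybe irrK Kkappa.
have comm := BYBE_limit_comm (quasi_classical_near1 qcR) bybe Kkappa.
apply: tensmx_scalar_blocks => i j.
pose Psis Ps := exists a b v, v \notin S /\ Ps = Psi K v a b.
apply: (@irreducible_comm_scalar _ _ Psis).
  by move=> U U_stable; apply: irrK => a b v vS; apply: U_stable; exists a, b, v.
move=> _ [a [b [v [vS ->]]]]; apply/matrixP => k l.
have /matrixP/(_ (mxtens_index (mxtens_index (i, a), k))
                 (mxtens_index (mxtens_index (j, b), l))) := comm v vS.
by rewrite leg13_mul_leg23 leg23_mul_leg13 => ->.
Qed.
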